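(* Let $A$ be a setoid, $B$ a setoid family over $A$ and $(C,a_C)$ a $P_B$-algebra. Let $h:W\Rightarrow C$ be an algebra morphism, i.e. $h\circ\mathsf s\approx a_C\circ(P_B\,h)$. Then for every $w:W$, the function $h|_w:=h\circ m_w:\mathsf{ImS}\,w\Rightarrow C$ is recursively defined, i.e. $\mathsf{RecDef}\,w\,(h|_w)$ is inhabited.
   Context: Setting: intensional Martin-Löf type theory with $\Pi$-types, record types and a universe $\mathsf U$ closed under $\Pi$ and containing intensional $\Sigma$-types, identity types, unit type, W-types and dependent W-types; propositions-as-types. For a W-type with constructor $\mathsf{sup}$, $\mathsf n,\mathsf b$ are node and branch functions. $\mathsf{DW}_{I,X,Y,d}:I\to\mathsf U$ denotes the dependent W-type: the inductive family with constructor $\mathsf{dsup}\,i\,x\,f:\mathsf{DW}\,i$ for $x:X\,i$ and $f:\prod_{y:Y\,i\,x}\mathsf{DW}(d\,i\,x\,y)$. A setoid $X$: type $X_0:\mathsf U$ with relation $\approx_X$ and proofs of reflexivity, symmetry, transitivity; $x:X$ means $x:X_0$. Extensional function $f:X\Rightarrow Y$: $f_0:X_0\to Y_0$ with a proof that it preserves $\approx$; $X\Rightarrow Y$ is a setoid with pointwise equality; $\circ$ is composition. A setoid family $B$ over setoid $A$: setoids $B\,a$ and transports $B_\alpha:B\,a\Rightarrow B\,a'$ for $\alpha:a\approx_Aa'$, functorial up to $\approx$, with $B_\alpha\approx B_{\alpha'}$ for all $\alpha,\alpha'$. Write $b\approx_\alpha b'$ for $B_\alpha b\approx b'$. $P_BX$: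 setoid with underlying type $\sum_{a:A}(B\,a\Rightarrow X)$ and $(a,k)\approx(a',k'):=\sum_{\alpha:a\approx a'}k\approx k'\circ B_\alpha$; $P_Bf(a,k):=(a,f\circ k)$. A $P_B$-algebra is a setoid $C$ with extensional $a_C:P_BC\Rightarrow C$. $W$: with $A_0,B_0$ underlying types and $\mathsf W:=\mathsf W(A_0,B_0)$, $\approx^Bw\,w':=\mathsf{DW}_{I,X,Y,d}(w,w')$ with $I:=\mathsf W\times\mathsf W$, $X(w,w'):=\mathsf nw\approx_A\mathsf nw'$, $Y(w,w')\alpha:=\sum_{b,b'}b\approx_\alpha b'$, $d(w,w')\alpha(b,b',\beta):=(\mathsf bwb,\mathsf bw'b')$. $W$: underlying type $\sum_{w:\mathsf W}\approx^Bw\,w$, $(w,\_)\approx_W(w',\_):=\approx^Bw\,w'$. $\mathsf n$, $\mathsf b$ induce extensional $\mathsf n:W\Rightarrow A$ and $\mathsf b\,w:B(\mathsf nw)\Rightarrow W$. $\mathsf s:P_BW\Rightarrow W$ sends $(a,f)$ to $\mathsf{sup}\,a\,f_0$ ($f_0$ underlying function of $f$). $\mathsf{ImS}\,w$ (for $w:W$): setoid with underlying type $B_0(\mathsf nw)$ and $b\approx b':=\mathsf bwb\approx_W\mathsf bwb'$; for $\sigma:s\approx s'$ in $\mathsf{ImS}\,w$, $\mathsf{ImS}_\sigma$ is transport along the induced proof of $\mathsf n(\mathsf bws)\approx_A\mathsf n(\mathsf bws')$. $e_w:B(\mathsf nw)\Rightarrow\mathsf{ImS}\,w$ has identity underlying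 function; $m_w:\mathsf{ImS}\,w\Rightarrow W$ has the underlying function of $\mathsf b\,w$. A family $F:\prod_{s:\mathsf{ImS}w}\mathsf{ImS}(\mathsf bws)\Rightarrow C$ is coherent if $F\,s\approx(F\,s')\circ\mathsf{ImS}_\sigma$ for all $\sigma:s\approx s'$; $\mathsf{CohMaps}\,w$ is the setoid of coherent families with pointwise equality. For $F:\mathsf{CohMaps}\,w$, $\mathsf{recst}\,w\,F:\mathsf{ImS}\,w\Rightarrow C$ is the extensional function $s\mapsto a_C(\mathsf n(\mathsf bws),(F\,s)\circ e_{\mathsf bws})$. For $k:\mathsf{ImS}\,w\Rightarrow C$, $\mathsf{RecDef}\,w\,k:=\mathsf{DW}_{I',X',Y',d'}(w,k)$ with $I':=\sum_{w:W}(\mathsf{ImS}w\Rightarrow C)$, $X'(w,k):=\sum_{F:\mathsf{CohMaps}w}k\approx\mathsf{recst}\,w\,F$, $Y'(w,k)(F,\_):=$ underlying type of $\mathsf{ImS}\,w$, $d'(w,k)(F,\_)s:=(\mathsf bws,F\,s)$; $k$ is recursively defined when $\mathsf{RecDef}\,w\,k$ is inhabited. *)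

(* The universe U is
   rendered as Rocq's Type; propositions-as-types: all relations are
   Type-valued (proof relevant). *)
Set Implicit Arguments.
Set Universe Polymorphism.

Record Setoid := {
  car :> Type;
  eqv : car -> car -> Type;
  srefl : forall x, eqv x x;
  ssym : forall x y, eqv x y -> eqv y x;
  strans : forall x y z, eqv x y -> eqv y z -> eqv x z }.
Arguments eqv {s} _ _.
Arguments srefl {s} _.
Arguments ssym {s} {x y} _.
Arguments strans {s} {x y z} _ _.
Notation "x ≈ y" := (eqv x y) (at level 70).

Record ExtFun (X Y : Setoid) := {
  app :> X -> Y;
  ext : forall x x' : X, x ≈ x' -> app x ≈ app x' }.
Arguments ext {X Y} _ {x x'} _.

Definition FunEq (X Y : Setoid) (f g : ExtFun X Y) : Type := forall x, f x ≈ g x.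

Definition FunSetoid (X Y : Setoid) : Setoid.
Proof.
  refine {| car := ExtFun X Y; eqv := @FunEq X Y |}.
  - intros f x; apply srefl.
  - intros f g H x; apply ssym, H.
  - intros f g h H1 H2 x; exact (strans (H1 x) (H2 x)).
Defined.

Definition comp (X Y Z : Setoid) (g : ExtFun Y Z) (f : ExtFun X Y) : ExtFun X Z :=
  {| app := fun x => g (f x); ext := fun x x' e => ext g (ext f e) |}.

Definition idf (X : Setoid) : ExtFun X X :=
  {| app := fun x => x; ext := fun x x' e => e |}.

Record Family (A : Setoid) := {
  fib :> A -> Setoid;
  tr : forall a a' : A, a ≈ a' -> ExtFun (fib a) (fib a');
  tr_refl : forall a (x : fib a), tr _ _ (srefl a) x ≈ x;
  tr_trans : forall a a' a'' (al : a ≈ a') (be : a' ≈ a'') (x : fib a),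
      tr _ _ be (tr _ _ al x) ≈ tr _ _ (strans al be) x;
  tr_pi : forall a a' (al al' : a ≈ a') (x : fib a), tr _ _ al x ≈ tr _ _ al' x }.
Arguments tr {A} _ {a a'} _.
Arguments tr_refl {A} _ {a} _.
Arguments tr_trans {A} _ {a a' a''} _ _ _.
Arguments tr_pi {A} _ {a a'} _ _ _.

Section Constructions.
Variable A : Setoid.
Variable B : Family A.

Lemma tr_loop (a : A) (al : a ≈ a) (x : B a) : tr B al x ≈ x.
Proof. exact (strans (tr_pi B al (srefl a) x) (tr_refl B x)). Qed.

Definition PB (X : Setoid) : Setoid.
Proof.
  refine {| car := {a : A & ExtFun (B a) X};
            eqv := fun p q => {al : projT1 p ≈ projT1 q &
                      FunEq (projT2 p) (comp (projT2 q) (tr B al))} |}.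
  - intros [a k]; exists (srefl a); intro x; simpl.
    apply (ext k), ssym, tr_refl.
  - intros [a k] [a' k'] [al H]; simpl in *.
    exists (ssym al); intro y; simpl.
    refine (strans _ (ssym (H _))); simpl.
    apply (ext k'), ssym.
    refine (strans (tr_trans B _ _ y) _).
    apply tr_loop.
  - intros [a k] [a' k'] [a'' k''] [al H] [be H']; simpl in *.
    exists (strans al be); intro x; simpl.
    refine (strans (H x) _); simpl.
    refine (strans (H' _) _); simpl.
    apply (ext k''), tr_trans.
Defined.

Definition PBmap (X Y : Setoid) (f : ExtFun X Y) : ExtFun (PB X) (PB Y).
Proof.
  refine {| app := fun p : PB X => (existT _ (projT1 p) (comp f (projT2 p)) : PB Y) |}.
  intros [a k] [a' k'] [al H]; exists al; intro x; simpl.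
  apply (ext f), H.
Defined.

Inductive Wt (A0 : Type) (B0 : A0 -> Type) : Type :=
  sup : forall a : A0, (B0 a -> Wt B0) -> Wt B0.

Definition wnode (A0 : Type) (B0 : A0 -> Type) (w : Wt B0) : A0 :=
  match w with sup a _ => a end.
Definition wbranch (A0 : Type) (B0 : A0 -> Type) (w : Wt B0) : B0 (wnode w) -> Wt B0 :=
  match w with sup a f => f end.

Inductive DW (I : Type) (X : I -> Type) (Y : forall i, X i -> Type)
    (d : forall i (x : X i), Y i x -> I) : I -> Type :=
  dsup : forall i (x : X i), (forall y : Y i x, DW X Y d (d i x y)) -> DW X Y d i.

Definition dnode I X Y d (i : I) (t : @DW I X Y d i) : X i :=
  match t with dsup _ x _ => x end.
Definition dbranch I X Y d (i : I) (t : @DW I X Y d i) :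
    forall y : Y i (dnode t), DW X Y d (d i (dnode t) y) :=
  match t with dsup _ x f => f end.

Definition W0 : Type := @Wt (car A) (fun a => car (B a)).

Definition XB (p : W0 * W0) : Type := wnode (fst p) ≈ wnode (snd p).
Definition YB (p : W0 * W0) (al : XB p) : Type :=
  {b : B (wnode (fst p)) & {b' : B (wnode (snd p)) & tr B al b ≈ b'}}.
Definition dB (p : W0 * W0) (al : XB p) (y : YB p al) : W0 * W0 :=
  (wbranch (fst p) (projT1 y), wbranch (snd p) (projT1 (projT2 y))).

Definition eqB (w w' : W0) : Type := DW XB YB dB (w, w').

Fixpoint eqB_sym_aux (p : W0 * W0) (t : DW XB YB dB p) {struct t} :
    DW XB YB dB (snd p, fst p).
Proof.
  destruct t as [p al f].
  refine (@dsup _ XB YB dB (snd p, fst p) (ssym al : XB (snd p, fst p)) _).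
  intros [b' [b be]]; simpl in *.
  refine (eqB_sym_aux _ (f (existT _ b (existT _ b' _)))).
  refine (strans (ssym (ext (tr B al) be)) _).
  refine (strans (tr_trans B _ _ b') _); apply tr_loop.
Defined.

Fixpoint eqB_trans_aux (p : W0 * W0) (t : DW XB YB dB p) {struct t} :
    forall w'', DW XB YB dB (snd p, w'') -> DW XB YB dB (fst p, w'').
Proof.
  destruct t as [p al f]; intros w'' s.
  pose (be := dnode s : XB (snd p, w'')).
  refine (@dsup _ XB YB dB (fst p, w'') (strans al be : XB (fst p, w'')) _).
  intros [b [b'' ga]]; simpl in *.
  refine (eqB_trans_aux _ (f (existT _ b (existT _ (tr B al b) (srefl _)))) _ _).
  simpl.
  refine (dbranch s (existT _ (tr B al b) (existT _ b'' _))).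
  exact (strans (tr_trans B al be b) ga).
Defined.

Definition W : Setoid.
Proof.
  refine {| car := {w : W0 & eqB w w};
            eqv := fun u v => eqB (projT1 u) (projT1 v) |}.
  - intros [w p]; exact p.
  - intros u v t; exact (eqB_sym_aux t).
  - intros u v z t s; exact (eqB_trans_aux t s).
Defined.

Definition n : ExtFun W A :=
  {| app := fun u : W => wnode (projT1 u);
     ext := fun u v (t : u ≈ v) => (dnode t : XB (projT1 u, projT1 v)) |}.

Definition bW0 (u : W) (x : B (n u)) : W.
Proof.
  exists (wbranch (projT1 u) x).
  refine (dbranch (projT2 u) (existT _ x (existT _ x _))).
  apply tr_loop.
Defined.

Definition b (u : W) : ExtFun (B (n u)) W.
Proof.
  refine {| app := bW0 u |}.
  intros x x' e; simpl.
  refine (dbranch (projT2 u) (existT _ x (existT _ x' _))).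
  refine (strans _ e); apply tr_loop.
Defined.

Definition s : ExtFun (PB W) W.
Proof.
  unshelve refine {| app := fun p : PB W =>
     (existT (fun w => eqB w w) (@sup _ (fun a => car (B a)) (projT1 p) (fun x => projT1 (projT2 p x))) _ : car W) |}.
  - destruct p as [a f]; simpl.
    simple refine (@dsup _ XB YB dB _ _ _); [exact (srefl a) |].
    intros [x [x' be]]; simpl in *.
    apply (ext f); exact (strans (ssym (tr_refl B x)) be).
  - intros [a f] [a' f'] [al H]; simpl in *.
    simple refine (@dsup _ XB YB dB _ _ _); [exact al |].
    intros [x [x' be]]; simpl in *.
    exact (strans (H x) (ext f' be)).
Defined.

Definition ImS (u : W) : Setoid.
Proof.
  refine {| car := car (B (n u)); eqv := fun x x' => b u x ≈ b u x' |}.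
  - intros x; apply srefl.
  - intros x y e; exact (ssym e).
  - intros x y z e1 e2; exact (strans e1 e2).
Defined.

Definition ImS_tr (u v : W) (sg : u ≈ v) : ExtFun (ImS u) (ImS v).
Proof.
  refine {| app := fun x : ImS u => (tr B (ext n sg) x : ImS v) |}.
  intros x x' e.
  assert (K : forall y : ImS u, b u y ≈ b v (tr B (ext n sg) y)).
  { intros y. refine (dbranch sg (existT _ y (existT _ (tr B (ext n sg) y) _))).
    apply tr_pi. }
  exact (@strans W _ _ _ (ssym (K x)) (@strans W _ _ _ e (K x'))).
Defined.

Definition e_ (u : W) : ExtFun (B (n u)) (ImS u) :=
  {| app := fun x : B (n u) => (x : ImS u); ext := fun x x' e => ext (b u) e |}.

Definition m_ (u : W) : ExtFun (ImS u) W :=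
  {| app := fun x : ImS u => b u x; ext := fun x x' e => e |}.

Section Algebra.
Variable C : Setoid.
Variable aC : ExtFun (PB C) C.

Definition coherent (u : W) (F : forall x : ImS u, ExtFun (ImS (b u x)) C) : Type :=
  forall (x x' : ImS u) (sg : x ≈ x'),
    FunEq (F x) (comp (F x') (ImS_tr sg)).

Definition CohMaps (u : W) : Setoid.
Proof.
  refine {| car := {F : forall x : ImS u, ExtFun (ImS (b u x)) C & coherent F};
            eqv := fun F G => forall x, FunEq (projT1 F x) (projT1 G x) |}.
  - intros F x y; apply srefl.
  - intros F G H x y; exact (ssym (H x y)).
  - intros F G K H1 H2 x y; exact (strans (H1 x y) (H2 x y)).
Defined.

Definition recst (u : W) (F : CohMaps u) : ExtFun (ImS u) C.
Proof.
  refine {| app := fun x : ImS u =>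
     aC (existT _ (n (b u x)) (comp (projT1 F x) (e_ (b u x))) : PB C) |}.
  intros x x' sg. apply (ext aC).
  exists (ext n sg); intro y; simpl.
  exact (projT2 F x x' sg y).
Defined.

Definition Iq : Type := {u : W & ExtFun (ImS u) C}.
Definition Xq (i : Iq) : Type :=
  {F : CohMaps (projT1 i) & FunEq (projT2 i) (recst F)}.
Definition Yq (i : Iq) (F : Xq i) : Type := car (ImS (projT1 i)).
Definition dq (i : Iq) (F : Xq i) (x : Yq F) : Iq :=
  existT _ (b (projT1 i) x) (projT1 (projT1 F) x).

Definition RecDef (u : W) (k : ExtFun (ImS u) C) : Type :=
  DW Xq Yq dq (existT _ u k).

End Algebra.
End Constructions.

Arguments W {A} B.
Arguments s {A B}.
Arguments m_ {A B} u.
Arguments PBmap {A B X Y} f.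
Arguments RecDef {A B C} aC u k.


(* By induction on the well-founded tree underlying w.  At each node the witness is
   the family of restrictions of h to the immediate subtrees: it is coherent because
   h is extensional, and recst of it agrees with h ∘ m_w because every element of W
   is bisimilar to sup of its own node and branches, to which the morphism square
   applies. *)

Section WSetoid.
Context {A : Setoid} {B : Family A}.

(* The reflexivity proof carried by u = sup a f is, up to conversion, a bisimilarity
   between sup a f and sup a (b u). *)
Lemma W_eta (u : W B) : u ≈ s (existT _ (n B u) (b u) : PB B (W B)).
Proof. destruct u as [[a f] p]; exact p. Qed.

Lemma m_ImS_tr {u v : W B} (sg : u ≈ v) (x : ImS u) : m_ u x ≈ m_ v (ImS_tr sg x).
Proof.
  refine (dbranch sg (existT _ x (existT _ (tr B (ext (n B) sg) x) _))).
  apply tr_pi.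
Qed.

Section Morphism.
Context {C : Setoid} {aC : ExtFun (PB B C) C} {h : ExtFun (W B) C}.
Hypothesis hmor : @eqv (FunSetoid (PB B (W B)) C) (comp h s) (comp aC (PBmap h)).

Lemma restrictions_coherent (u : W B) : coherent (fun x : ImS u => comp h (m_ (b u x))).
Proof. intros x x' sg y; exact (ext h (m_ImS_tr (u := b u x) (v := b u x') sg y)). Qed.

Definition restrictions (u : W B) : CohMaps C u :=
  existT _ (fun x : ImS u => comp h (m_ (b u x))) (restrictions_coherent u).

Lemma hom_unfold (v : W B) :
  h v ≈ aC (existT _ (n B v) (comp (comp h (m_ v)) (e_ v)) : PB B C).
Proof.
  refine (strans (ext h (W_eta v)) (strans (hmor _) _)).
  apply (ext aC); exists (srefl _); intros y.
  exact (ext h (ext (b v) (ssym (tr_refl B y)))).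
Qed.

Lemma restriction_eq_recst (u : W B) : FunEq (comp h (m_ u)) (recst aC (restrictions u)).
Proof. intros x; exact (hom_unfold (b u x)). Qed.

Lemma RecDef_restriction (u : W B) :
  (forall x : ImS u, RecDef aC (b u x) (comp h (m_ (b u x)))) ->
  RecDef aC u (comp h (m_ u)).
Proof.
  exact (@dsup _ (Xq aC) (@Yq A B C aC) (@dq A B C aC) (existT _ u (comp h (m_ u)))
           (existT _ (restrictions u) (restriction_eq_recst u))).
Qed.

End Morphism.
End WSetoid.

Theorem lemma3p14 (A : Setoid) (B : Family A) (C : Setoid) (aC : ExtFun (PB B C) C)
    (h : ExtFun (W B) C)
    (hmor : @eqv (FunSetoid (PB B (W B)) C) (comp h s) (comp aC (PBmap h))) :
  forall w : W B, RecDef aC w (comp h (m_ w)).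
Proof.
  intros [w p]; revert p.
  induction w as [a f IH]; intros p.
  apply (RecDef_restriction hmor); intros x.
  apply IH.
Qed.
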